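(* Let $T$ be a singular weighted tree with adjacency matrix $A$. Then $A$ and $A^{\#}$ have the same zero–nonzero pattern if and only if $T$ is a weighted star.
   Context: A weighted tree has a nonzero real weight on each edge; its adjacency matrix $A$ has $(i,j)$ entry equal to the weight of edge $v_iv_j$, or $0$ if no edge; $T$ is singular if $A$ is singular. $A^{\#}$ is the group inverse of $A$, the unique $X$ with $AXA=A$, $XAX=X$, $AX=XA$. *)

From mathcomp Require Import all_boot all_order all_algebra.
From mathcomp Require Import reals.
Set Implicit Arguments. Unset Strict Implicit. Unset Printing Implicit Defensive.
Import Order.TTheory GRing.Theory Num.Theory.
Local Open Scope ring_scope.

(* Vertices of a graph on n vertices are 'I_n.  A weighted graph is given by
   its (real) adjacency matrix A: A i j is the weight of edge v_i v_j, or 0 if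
   there is no edge. *)

Definition adjrel (R : realType) (n : nat) (A : 'M[R]_n) : rel 'I_n :=
  fun i j => A i j != 0.

Definition acyclic (n : nat) (e : rel 'I_n) : Prop :=
  forall c : seq 'I_n, uniq c -> (2 < size c)%N -> ~~ cycle e c.

Definition connected (n : nat) (e : rel 'I_n) : Prop :=
  forall i j : 'I_n, connect e i j.

Definition weighted_tree_adj (R : realType) (n : nat) (A : 'M[R]_n) : Prop :=
  [/\ A^T = A, (forall i, A i i = 0),
      connected (adjrel A) & acyclic (adjrel A)].

Definition is_star (R : realType) (n : nat) (A : 'M[R]_n) : Prop :=
  exists c : 'I_n, forall i j, A i j != 0 -> (i == c) || (j == c).

Definition singular_mx (R : realType) (n : nat) (A : 'M[R]_n) : Prop :=
  \det A = 0.

Definition group_inverse (R : realType) (n : nat) (A X : 'M[R]_n) : Prop :=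
  [/\ A *m X *m A = A, X *m A *m X = X & A *m X = X *m A].

Definition same_pattern (R : realType) (n : nat) (A B : 'M[R]_n) : Prop :=
  forall i j, (A i j == 0) = (B i j == 0).

From mathcomp Require Import all_boot all_order all_algebra.
From mathcomp Require Import reals.
Set Implicit Arguments. Unset Strict Implicit. Unset Printing Implicit Defensive.
Import Order.TTheory GRing.Theory Num.Theory.
Local Open Scope ring_scope.

(* In a tree, two vertices i, j at distance three are joined by exactly one walk
   i k l j of length three, so the (i, j) entry of A A^# A = A collapses to the
   single product A_ik A^#_kl A_lj.  If A^# had the zero pattern of A, this
   product would be nonzero while A_ij = 0; hence no two vertices are at distance
   three and the tree is a star.  Conversely, the adjacency matrix of a star with
   centre c is the rank-two matrix e_c^T w + w^T e_c, where w is row c of A; it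
   satisfies A^3 = (w w^T) A, so A^# is a nonzero multiple of A unless A = 0.
   Singularity is only used to exclude the empty tree. *)

(* In an acyclic graph a non-backtracking walk [i k l j] is a path on four vertices. *)
Definition P4_free {n : nat} (e : rel 'I_n) : Prop :=
  forall i k l j, e i k -> e k l -> e l j -> i != l -> k != j -> False.

Section AcyclicGraph.
Context {n : nat} {e : rel 'I_n}.
Hypotheses (e_sym : symmetric e) (e_irr : irreflexive e) (e_acyc : acyclic e).

Lemma cycle_false c : uniq c -> (2 < size c)%N -> cycle e c -> False.
Proof. by move=> c_uniq c_size; apply/negP/e_acyc. Qed.

Lemma edge_neq x y : e x y -> x != y.
Proof. by apply: contraTneq => ->; rewrite e_irr. Qed.

Lemma no_cycle3 x y z : e x y -> e y z -> e z x -> False.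
Proof.
move=> exy eyz ezx; apply: (cycle_false (c := [:: x; y; z])) => //=.
  have exz : e x z by rewrite e_sym.
  by rewrite !inE !negb_or (edge_neq exy) (edge_neq eyz) (edge_neq exz).
by rewrite exy eyz ezx.
Qed.

Lemma no_cycle4 x y z w :
  e x y -> e y z -> e z w -> e w x -> x != z -> y != w -> False.
Proof.
move=> exy eyz ezw ewx nxz nyw.
apply: (cycle_false (c := [:: x; y; z; w])) => //=.
  have exw : e x w by rewrite e_sym.
  rewrite !inE !negb_or (edge_neq exy) (edge_neq eyz) (edge_neq ezw).
  by rewrite (edge_neq exw) nxz nyw.
by rewrite exy eyz ezw ewx.
Qed.

Lemma no_cycle6 x1 x2 x3 x4 x5 x6 :
  e x1 x2 -> e x2 x3 -> e x3 x4 -> e x4 x5 -> e x5 x6 -> e x6 x1 ->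
  x1 != x3 -> x1 != x4 -> x1 != x5 -> x2 != x4 -> x2 != x5 -> x2 != x6 ->
  x3 != x5 -> x3 != x6 -> x4 != x6 -> False.
Proof.
move=> e12 e23 e34 e45 e56 e61 n13 n14 n15 n24 n25 n26 n35 n36 n46.
apply: (cycle_false (c := [:: x1; x2; x3; x4; x5; x6])) => //=.
  have e16 : e x1 x6 by rewrite e_sym.
  rewrite !inE !negb_or (edge_neq e12) (edge_neq e23) (edge_neq e34).
  rewrite (edge_neq e45) (edge_neq e56) (edge_neq e16).
  by rewrite n13 n14 n15 n24 n25 n26 n35 n36 n46.
by rewrite e12 e23 e34 e45 e56 e61.
Qed.

Lemma path3_nonadjacent i k l j :
  e i k -> e k l -> e l j -> i != l -> k != j -> ~~ e i j.
Proof.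
move=> eik ekl elj nil nkj; apply/negP => eij.
by apply: (no_cycle4 eik ekl elj) => //; rewrite e_sym.
Qed.

Lemma path3_walk_unique i k l j a b :
  e i k -> e k l -> e l j -> i != l -> k != j ->
  e i a -> e a b -> e b j -> a = k /\ b = l.
Proof.
move=> eik ekl elj nil nkj eia eab ebj.
have neij := path3_nonadjacent eik ekl elj nil nkj.
have nij : i != j.
  by apply: contraTneq elj => <-; apply/negP => eli; apply: (no_cycle3 eik ekl eli).
have [eak | nak] := eqVneq a k; have [ebl | nbl] := eqVneq b l => //; exfalso.
- move: eab; rewrite eak => ekb.
  by apply: (no_cycle4 ekl elj (_ : e j b) (_ : e b k) nkj); rewrite 1?e_sym // eq_sym.
- move: eab; rewrite ebl => eal.
  by apply: (no_cycle4 eik ekl (_ : e l a) (_ : e a i) nil); rewrite 1?e_sym // eq_sym.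
have [eal | nal] := eqVneq a l.
  by move: eia; rewrite eal e_sym => eli; apply: (no_cycle3 eik ekl eli).
have [ebk | nbk] := eqVneq b k.
  by move: ebj; rewrite ebk e_sym => ejk; apply: (no_cycle3 ekl elj ejk).
have [eaj | naj] := eqVneq a j; first by rewrite -eaj eia in neij.
have [ebi | nbi] := eqVneq b i; first by rewrite -ebi ebj in neij.
apply: (no_cycle6 eik ekl elj (_ : e j b) (_ : e b a) (_ : e a i));
  by rewrite 1?e_sym // eq_sym.
Qed.

Hypothesis e_conn : connected e.

Lemma star_of_leaf_edge c v : P4_free e -> e c v -> (forall x, e v x -> x = c) ->
  forall i j, e i j -> (i == c) || (j == c).
Proof.
move=> noP4 ecv v_leaf.
have two_hops_c x y : e c x -> e x y -> y = c.
  move=> ecx exy; apply/eqP/negPn/negP => nyc.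
  have nxv : x != v by apply: contraNneq nyc => exv; apply/eqP/v_leaf; rewrite -exv.
  by apply: (noP4 y x c v); rewrite // e_sym.
pose S := [pred x | (x == c) || e c x].
have S_closed : closed e S.
  apply: intro_closed; first exact: sym_connect_sym.
  move=> x y exy; rewrite !inE => /orP[/eqP exc | ecx]; first by rewrite -exc exy orbT.
  by rewrite (two_hops_c x y ecx exy) eqxx.
have inS x : (x == c) || e c x.
  by have := closed_connect S_closed (e_conn c x); rewrite !inE eqxx => <-.
move=> i j eij; apply/negPn/negP; rewrite negb_or => /andP[nic njc].
move: (inS i) (inS j); rewrite (negbTE nic) (negbTE njc) /= => eci ecj.
by apply: (no_cycle3 eci eij); rewrite e_sym.
Qed.

Lemma star_of_P4_free (v0 : 'I_n) : P4_free e ->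
  exists c, forall i j, e i j -> (i == c) || (j == c).
Proof.
move=> noP4.
have [[k l] /= ekl | no_edge] := pickP (fun p : 'I_n * 'I_n => e p.1 p.2); last first.
  by exists v0 => i j eij; move: (no_edge (i, j)); rewrite /= eij.
have [i /andP[eki nil] | k_leaf] := pickP (fun x => e k x && (x != l)); last first.
  exists l; apply: (star_of_leaf_edge (v := k) noP4); first by rewrite e_sym.
  by move=> x ekx; apply/eqP; move: (k_leaf x); rewrite /= ekx => /negbFE.
have [j /andP[elj njk] | l_leaf] := pickP (fun x => e l x && (x != k)); last first.
  exists k; apply: (star_of_leaf_edge noP4 ekl).
  by move=> x elx; apply/eqP; move: (l_leaf x); rewrite /= elx => /negbFE.
have eik : e i k by rewrite e_sym.
by case: (noP4 i k l j eik ekl elj nil); rewrite eq_sym.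
Qed.

End AcyclicGraph.

Lemma mulmx3_entry_single (R : pzRingType) n (A X B : 'M[R]_n) i j k l :
  (forall a b, (a, b) != (k, l) -> A i a * X a b * B b j = 0) ->
  (A *m X *m B) i j = A i k * X k l * B l j.
Proof.
move=> off_kl; rewrite mxE (bigD1 l) //= big1 => [|b nbl]; last first.
  rewrite mxE mulr_suml big1 // => a _.
  by apply: off_kl; rewrite xpair_eqE negb_and nbl orbT.
rewrite addr0 mxE mulr_suml (bigD1 k) //= big1 ?addr0 // => a nak.
by apply: off_kl; rewrite xpair_eqE negb_and nak.
Qed.

Lemma rank2_sym_cube (R : comPzRingType) n (u w : 'rV[R]_n) (M : 'M[R]_n) :
  M = u^T *m w + w^T *m u -> u *m u^T = 1%:M -> w *m u^T = 0 ->
  M *m M *m M = (w *m w^T) 0 0 *: M.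
Proof.
move=> defM uu wu; set s := (w *m w^T) 0 0.
have uw : u *m w^T = 0 by rewrite -[u]trmxK -trmx_mul wu trmx0.
have Mu : M *m u^T = w^T.
  by rewrite defM mulmxDl -!mulmxA wu uu mulmx0 mulmx1 add0r.
have Mw : M *m w^T = s *: u^T.
  by rewrite defM mulmxDl -!mulmxA uw [w *m _]mx11_scalar mul_mx_scalar mulmx0 addr0.
have MM : M *m M = w^T *m w + s *: (u^T *m u).
  by rewrite {2}defM mulmxDr !mulmxA Mu Mw scalemxAl.
by rewrite -mulmxA MM mulmxDr -scalemxAr !mulmxA Mw Mu -scalemxAl -scalerDr -defM.
Qed.

Lemma star_adj_rank2 (R : pzRingType) n (A : 'M[R]_n) c :
  A^T = A -> (forall i, A i i = 0) -> (forall i j, A i j != 0 -> (i == c) || (j == c)) ->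
  A = (delta_mx 0 c)^T *m row c A + (row c A)^T *m delta_mx 0 c.
Proof.
move=> sym diag0 star; apply/matrixP => i j; rewrite !mxE !big_ord1 !mxE /=.
have [-> | nic] := eqVneq i c; first by rewrite mul1r diag0 mul0r addr0.
rewrite mul0r add0r; have [-> | njc] := eqVneq j c; first by rewrite mulr1 -[in LHS]sym mxE.
by rewrite mulr0; apply: contraNeq (star i j) _; rewrite negb_or nic njc.
Qed.

Section GroupInverse.
Variables (R : realType) (n : nat) (A : 'M[R]_n).

Lemma group_inverse_unique X Y : group_inverse A X -> group_inverse A Y -> X = Y.
Proof.
case=> [AXA XAX AX_XA] [AYA YAY AY_YA].
have AX_AY : A *m X = A *m Y.
  by rewrite -{1}AYA -mulmxA AX_XA AY_YA -mulmxA (mulmxA A) AXA.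
by rewrite -XAX -AX_XA AX_AY AY_YA -mulmxA AX_AY mulmxA YAY.
Qed.

Lemma group_inverse_cube_scale s : A *m A *m A = s *: A -> s != 0 ->
  group_inverse A (s^-1 *: A).
Proof.
move=> cubeA s_neq0; split.
- by rewrite -scalemxAr -scalemxAl cubeA scalerA mulVf // scale1r.
- by rewrite -!scalemxAl -!scalemxAr cubeA !scalerA -mulrA mulVf // mulr1.
- by rewrite -scalemxAr -scalemxAl.
Qed.

Lemma group_inverse_cube0 X : group_inverse A X -> A *m A *m A = 0 -> A = 0.
Proof.
case=> [AXA _ AX_XA] cubeA.
have AAX : A = A *m A *m X by rewrite -{1}AXA -mulmxA -AX_XA mulmxA.
by rewrite AAX {2}AAX !mulmxA cubeA !mul0mx.
Qed.

End GroupInverse.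

Lemma adjrel_sym (R : realType) n (A : 'M[R]_n) : A^T = A -> symmetric (adjrel A).
Proof. by move=> sym i j; rewrite /adjrel -{1}sym mxE. Qed.

Lemma adjrel_irr (R : realType) n (A : 'M[R]_n) :
  (forall i, A i i = 0) -> irreflexive (adjrel A).
Proof. by move=> diag0 i; rewrite /adjrel diag0 eqxx. Qed.

Lemma group_inverse_pattern_P4_free (R : realType) n (A X : 'M[R]_n) :
  A^T = A -> (forall i, A i i = 0) -> acyclic (adjrel A) ->
  group_inverse A X -> same_pattern A X -> P4_free (adjrel A).
Proof.
move=> sym diag0 acyc [AXA _ _] pat i k l j eik ekl elj nil nkj.
have e_sym := adjrel_sym sym; have e_irr := adjrel_irr diag0.
have single a b : (a, b) != (k, l) -> A i a * X a b * A b j = 0.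
  apply: contraNeq; rewrite !mulf_eq0 !negb_or -pat => /andP[/andP[eia eab] ebj].
  by have [-> ->] := path3_walk_unique e_sym e_irr acyc eik ekl elj nil nkj eia eab ebj.
have Aij0 : A i j == 0.
  exact/negPn/(path3_nonadjacent e_sym e_irr acyc eik ekl elj nil nkj).
have : A i k * X k l * A l j != 0 by rewrite !mulf_neq0 // -pat.
by rewrite -(mulmx3_entry_single single) AXA Aij0.
Qed.

Lemma star_same_pattern (R : realType) n (A X : 'M[R]_n) :
  A^T = A -> (forall i, A i i = 0) -> group_inverse A X -> is_star A -> same_pattern A X.
Proof.
move=> sym diag0 gX [c star]; pose u : 'rV[R]_n := delta_mx 0 c; pose w := row c A.
have uu : u *m u^T = 1%:M.
  by rewrite trmx_delta mul_delta_mx; apply/matrixP => a b; rewrite !ord1 !mxE.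
have wu : w *m u^T = 0.
  by rewrite trmx_delta -colE; apply/matrixP => a b; rewrite !mxE diag0.
have cubeA := rank2_sym_cube (star_adj_rank2 sym diag0 star) uu wu.
have [s0 | s_neq0] := eqVneq ((w *m w^T) 0 0) 0.
  have A0 : A = 0 by apply: (group_inverse_cube0 gX); rewrite cubeA s0 scale0r.
  have X0 : X = 0 by case: gX => _ <- _; rewrite A0 mulmx0 mul0mx.
  by move=> i j; rewrite A0 X0 !mxE.
rewrite (group_inverse_unique gX (group_inverse_cube_scale cubeA s_neq0)) => i j.
by rewrite mxE mulf_eq0 invr_eq0 (negbTE s_neq0).
Qed.

Lemma singular_mx_dim_gt0 (R : realType) n (A : 'M[R]_n) : singular_mx A -> (0 < n)%N.
Proof. by case: n A => // A; rewrite /singular_mx det_mx00 => /eqP; rewrite oner_eq0. Qed.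

Theorem corollary2p13 (R : realType) (n : nat) (A Ag : 'M[R]_n) :
  weighted_tree_adj A -> singular_mx A -> group_inverse A Ag ->
  (same_pattern A Ag <-> is_star A).
Proof.
case=> sym diag0 conn acyc singA gAg; split; last exact: star_same_pattern.
move=> pat; have noP4 := group_inverse_pattern_P4_free sym diag0 acyc gAg pat.
have v0 : 'I_n := Ordinal (singular_mx_dim_gt0 singA).
exact: (star_of_P4_free (adjrel_sym sym) (adjrel_irr diag0) acyc conn v0 noP4).
Qed.
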